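(* Let $a,d\in\mathbb C$ and let $n\in\mathbb C$ with $d-n\in\mathbb N$. Then the polynomial $$f(a,d,n)_x=\sum_{k=0}^{d-n}\binom{a+d+x-k}{k}\binom{d+k-x}{d-n-k}\in\mathbb C[x]$$ is constant in $x$; its value depends only on $a$, $d$ and $n$.
   Context: For $z\in\mathbb C$ (or $z$ a polynomial in $x$) and $k\in\mathbb N$, the binomial coefficient is $\binom{z}{k}=\frac{z(z-1)\cdots(z-k+1)}{k!}$. *)

From HB Require Import structures.
From mathcomp Require Import all_boot all_order all_algebra.
From mathcomp Require Import complex.
From mathcomp Require Import Rstruct.
From Stdlib Require Import Reals.
Set Implicit Arguments. Unset Strict Implicit. Unset Printing Implicit Defensive.
Import GRing.Theory.
Local Open Scope ring_scope.

Notation CC := (complex Rdefinitions.R).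

Definition binomp (p : {poly CC}) (k : nat) : {poly CC} :=
  (k`!%:R)^-1 *: \prod_(i < k) (p - (i%:R)%:P).

(* f(a,d,n)_x with m = d - n in N:
   sum_{k=0}^{m} binom(a+d+x-k, k) binom(d+k-x, m-k) *)
Definition fpoly (a d : CC) (m : nat) : {poly CC} :=
  \sum_(k < m.+1)
     binomp ('X + (a + d - k%:R)%:P) k * binomp ((d + k%:R)%:P - 'X) (m - k).

From HB Require Import structures.
From mathcomp Require Import all_boot all_order all_algebra.
From mathcomp Require Import complex Rstruct.
From mathcomp Require Import ring.
Import GRing.Theory Num.Theory.
Local Open Scope ring_scope.

(** Evaluated at [x], the summands of [fpoly a d m] are the terms of the
    sum [vandersum m u v] below with [u = x + a + d] and [v = d - x].
    Shifting [x] by one turns [(u, v)] into [(u + 1, v - 1)], and two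
    applications of Pascal's rule show by induction on [m] that this sum is
    invariant under that shift.  So the polynomial takes the same value at
    every natural number, hence is constant. *)

Section GeneralizedBinomial.

Variable R : numFieldType.

Definition binomr (z : R) (k : nat) : R :=
  (k`!%:R)^-1 * \prod_(i < k) (z - i%:R).

Lemma binomr0 (z : R) : binomr z 0 = 1.
Proof. by rewrite /binomr big_ord0 fact0 invr1 mulr1. Qed.

Lemma binomrS_addr1 (z : R) k :
  binomr (z + 1) k.+1 = binomr z k.+1 + binomr z k.
Proof.
rewrite /binomr big_ord_recl big_ord_recr /=.
have -> : \prod_(i < k) (z + 1 - (bump 0 i)%:R) = \prod_(i < k) (z - i%:R).
  by apply: eq_bigr => i _; rewrite /bump /= add1n -natr1; ring.
have kS_neq0 : (k%:R + 1 : R) != 0 by rewrite natr1 pnatr_eq0.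
have fact_neq0 : (k`!%:R : R) != 0 by rewrite pnatr_eq0 -lt0n fact_gt0.
rewrite factS natrM -natr1; field.
by rewrite kS_neq0 fact_neq0.
Qed.

Definition vandersum (m : nat) (u v : R) : R :=
  \sum_(k < m.+1) binomr (u - k%:R) k * binomr (v + k%:R) (m - k).

(* Both sides split, by Pascal's rule on the first resp. second factor, as a
   common sum plus a sum of the same shape of order [m - 1]. *)
Lemma vandersum_shift m u v : vandersum m (u + 1) (v - 1) = vandersum m u v.
Proof.
elim: m u v => [|m IHm] u v; first by rewrite /vandersum !big_ord1 /= !binomr0.
set S := \sum_(k < m.+2) binomr (u - k%:R) k * binomr (v - 1 + k%:R) (m.+1 - k).
have splitL : vandersum m.+1 (u + 1) (v - 1) = S + vandersum m (u - 1) v.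
  rewrite /vandersum /S big_ord_recl [X in _ = X + _]big_ord_recl /=.
  rewrite !binomr0 !mul1r -[RHS]addrA -big_split /=; congr (_ + _).
  apply: eq_bigr => i _; rewrite /bump /= add1n subSS -!natr1.
  have -> : u + 1 - (i%:R + 1) = (u - 1 - i%:R) + 1 by ring.
  rewrite binomrS_addr1 mulrDl; congr (_ * _ + _ * _); congr binomr; ring.
have splitR : vandersum m.+1 u v = S + vandersum m u (v - 1).
  rewrite /vandersum /S big_ord_recr [X in _ = X + _]big_ord_recr /=.
  rewrite !subnn !binomr0 !mulr1 -[RHS]addrA [X in _ = _ + X]addrC [RHS]addrA.
  rewrite -big_split /=; congr (_ + _).
  apply: eq_bigr => i _; rewrite subSn; last by rewrite -ltnS.
  have -> : v + i%:R = (v - 1 + i%:R) + 1 by ring.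
  by rewrite binomrS_addr1 mulrDr.
by rewrite splitL splitR -IHm; congr (_ + vandersum _ _ _); ring.
Qed.

End GeneralizedBinomial.

Arguments binomr {R}.
Arguments vandersum {R}.

Lemma horner_binomp (p : {poly CC}) k x : (binomp p k).[x] = binomr p.[x] k.
Proof.
rewrite /binomp hornerZ horner_prod; congr (_ * _).
by apply: eq_bigr => i _; rewrite hornerD hornerN hornerC.
Qed.

Lemma horner_fpoly a d m x :
  (fpoly a d m).[x] = vandersum m (x + a + d) (d - x).
Proof.
rewrite /fpoly horner_sum; apply: eq_bigr => k _.
rewrite hornerM !horner_binomp.
by congr (binomr _ _ * binomr _ _); rewrite !(hornerD, hornerN, hornerX, hornerC); ring.
Qed.

Lemma poly_const_on_nat (R : numDomainType) (p : {poly R}) :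
  (forall j : nat, p.[j%:R] = p.[0]) -> p = p.[0]%:P.
Proof.
move=> p_const; apply/eqP; rewrite -subr_eq0; apply/negPn/negP => q_neq0.
set rs := [seq (i%:R : R) | i <- iota 0 (size (p - p.[0]%:P))].
have rs_roots : all (root (p - p.[0]%:P)) rs.
  apply/allP => _ /mapP [j _ ->].
  by rewrite /root hornerD hornerN hornerC p_const subrr.
have rs_uniq : uniq rs.
  by rewrite map_inj_uniq ?iota_uniq // => i j /eqP; rewrite eqr_nat => /eqP.
by have := max_poly_roots q_neq0 rs_roots rs_uniq; rewrite size_map size_iota ltnn.
Qed.

Theorem theorem4p2 (a d n : CC) (m : nat) (hdn : d - n = m%:R) :
  exists c : CC, fpoly a d m = c%:P.
Proof.
(* [hdn] only ties [n] to [m]; the argument never uses it. *)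
exists (fpoly a d m).[0]; apply: poly_const_on_nat.
elim=> [|j IHj] //; rewrite -IHj !horner_fpoly -natr1 -[in RHS]vandersum_shift.
by congr vandersum; ring.
Qed.
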